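(* Let $k\ge 1$ be an integer and let $GP(3k,k)$ be the generalised Petersen graph. If $k$ is odd, the number of $1$-factorisations of $GP(3k,k)$ equals the Jacobsthal number $J(k)$; if $k$ is even, the number of $1$-factorisations of $GP(3k,k)$ equals $4J(k)$.
   Context: For integers $n,k$ with $1\le k<n/2$, the generalised Petersen graph $GP(n,k)$ has vertex set $\{u_i,v_i : i\in\mathbb{Z}_n\}$ and edge set $\{u_iu_{i+1},\ u_iv_i,\ v_iv_{i+k} : i\in\mathbb{Z}_n\}$ (indices modulo $n$). A $1$-factorisation of a graph is a partition of its edge set into perfect matchings (unordered). The Jacobsthal numbers are defined by $J(0)=0$, $J(1)=1$ and $J(k)=J(k-1)+2J(k-2)$ for $k\ge 2$. *)

From mathcomp Require Import all_boot.
Unset Printing Implicit Defensive.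

(* Vertices of GP(n,k): (false, i) = u_i, (true, i) = v_i, i in Z_n = 'I_n. *)
Definition gp_vertex (n : nat) : finType := (bool * 'I_n)%type.

Definition gp_adj (n k : nat) : rel (gp_vertex n) :=
  fun x y =>
    match x, y with
    | (false, i), (false, j) => (val j == (val i + 1) %% n) || (val i == (val j + 1) %% n)
    | (false, i), (true, j) | (true, j), (false, i) => val i == val j
    | (true, i), (true, j) => (val j == (val i + k) %% n) || (val i == (val j + k) %% n)
    end.

Definition gp_edges (n k : nat) : {set {set gp_vertex n}} :=
  [set e : {set gp_vertex n} |
     [exists x : gp_vertex n, exists y : gp_vertex n, gp_adj n k x y && (e == [set x; y])]].

Definition perfect_matching (n k : nat) (M : {set {set gp_vertex n}}) : bool :=
  (M \subset gp_edges n k) &&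
  [forall x : gp_vertex n, #|[set e in M | x \in e]| == 1].

Definition one_factorisation (n k : nat) (F : {set {set {set gp_vertex n}}}) : bool :=
  partition F (gp_edges n k) && [forall M in F, perfect_matching n k M].

Definition one_factorisations (n k : nat) : {set {set {set {set gp_vertex n}}}} :=
  [set F | one_factorisation n k F].

Fixpoint jacobsthal (k : nat) : nat :=
  match k with
  | 0 => 0
  | 1 => 1
  | (k'.+1 as k1).+1 => jacobsthal k1 + 2 * jacobsthal k'
  end.

From mathcomp Require Import all_boot zify.
Set Implicit Arguments. Unset Strict Implicit. Unset Printing Implicit Defensive.

(** The three edges at a vertex of the cubic graph GP(3k,k) lie in distinct factors,
    so a 1-factorisation is a proper 3-edge-colouring up to renaming the colours; the
    renaming is fixed by prescribing the colours 0, 1, 2 at the edges u_0u_1, u_0v_0 and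
    u_(3k-1)u_0.  Such a colouring is determined by its restriction e to the outer
    cycle: the spoke at u_i takes the third colour of the two outer edges at u_i, and
    since the inner edges form the triangles v_i v_(i+k) v_(i+2k), each inner edge takes
    the colour of the spoke at the opposite corner.  Grouping e into the triples
    (e_i, e_(i+k), e_(i+2k)), properness becomes a compatibility relation between
    consecutive triples, and the triple after the (k-1)-st is the rotation of the first.
    The count is therefore a weighted number of closed walks of length k-1 in a graph on
    27 states.  Its adjacency matrix A satisfies A^5 - 5A^3 + 4A = 0, checked by
    computation, so the counts satisfy the recurrence with characteristic roots 1, -1,
    2, -2, as does the closed form in Jacobsthal numbers; the initial values agree. *)

Lemma card_bij_in (T U : finType) (A : {set T}) (B : {set U}) (f : T -> U) (g : U -> T) :
  {in A, forall a, f a \in B} -> {in B, forall b, g b \in A} ->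
  {in A, cancel f g} -> {in B, cancel g f} -> #|A| = #|B|.
Proof.
move=> fA gB fK gK; rewrite -(card_in_imset (can_in_inj fK)).
congr #|pred_of_set _|; apply/setP => b; apply/imsetP/idP => [[a aA ->]|bB].
  exact: fA.
by exists (g b); rewrite ?gK ?gB.
Qed.

Lemma card_set_count (T : finType) (P : pred T) (s : seq T) :
  uniq s -> #|[set x | P x && (x \in s)]| = count P s.
Proof.
move=> s_uniq; rewrite -size_filter -(card_uniqP (filter_uniq P s_uniq)).
by apply: eq_card => x; rewrite inE mem_filter.
Qed.

Lemma card_set_sum (T : finType) (P : pred T) : #|[set x | P x]| = \sum_x P x.
Proof. by rewrite -sum1dep_card big_mkcond /=; apply: eq_bigr => x _; case: (P x). Qed.

Lemma big_tuple_cons (T : finType) m (F : m.+1.-tuple T -> nat) :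
  \sum_(t : m.+1.-tuple T) F t = \sum_(x : T) \sum_(t : m.-tuple T) F [tuple of x :: t].
Proof.
rewrite pair_bigA (reindex (fun p : T * m.-tuple T => [tuple of p.1 :: p.2])) //=.
exists (fun t : m.+1.-tuple T => (thead t, [tuple of behead t])).
- by move=> [x t] _ /=; rewrite theadE; congr pair; apply: val_inj.
- by move=> t _; rewrite [RHS]tuple_eta; apply: val_inj.
Qed.

Lemma modn_addE n i a :
  i < n -> a <= n -> (i + a) %% n = if i + a < n then i + a else i + a - n.
Proof.
move=> ltin lean; case: ifP => lt_ian; first by rewrite modn_small.
have -> : i + a = (i + a - n) + n by rewrite subnK // leqNgt lt_ian.
by rewrite modnDr modn_small; lia.
Qed.

Lemma ord_eqE m (a b : 'I_m) : (a == b) = (nat_of_ord a == nat_of_ord b).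
Proof. by []. Qed.

Lemma map_nth_index (T U : eqType) (x0 : U) (s : seq T) (t : seq U) :
  uniq s -> size t = size s -> [seq nth x0 t (index x s) | x <- s] = t.
Proof.
case: s => [|x s] us st; first by case: t st.
apply: (@eq_from_nth _ x0); rewrite size_map ?st // => i lt_i.
by rewrite (nth_map x) // index_uniq.
Qed.

Lemma path_iota_map (T : Type) (r : rel T) (f : nat -> T) a m :
  path r (f a) [seq f i | i <- iota a.+1 m] = all (fun i => r (f i) (f i.+1)) (iota a m).
Proof. by elim: m a => //= m IH a; rewrite IH. Qed.

Lemma last_iota a m : last a (iota a.+1 m) = a + m.
Proof. by elim: m a => [|m IH] a /=; rewrite ?addn0 ?IH ?addnS. Qed.

Section Walks.
Variables (T : finType) (r : rel T).

Fixpoint nwalks m x y : nat :=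
  if m is m'.+1 then \sum_z r x z * nwalks m' z y else x == y.

Lemma nwalksD a b x y : nwalks (a + b) x y = \sum_z nwalks a x z * nwalks b z y.
Proof.
elim: a x => [|a IH] x /=.
  rewrite (bigD1 x) //= eqxx mul1n big1 ?addn0 // => z.
  by rewrite eq_sym => /negbTE ->.
under eq_bigr do rewrite IH big_distrr /=.
rewrite exchange_big /=; apply: eq_bigr => z _; rewrite big_distrl /=.
by apply: eq_bigr => w _; rewrite mulnA.
Qed.

Lemma sum_path_last m x y :
  \sum_(t : m.-tuple T) (path r x t && (last x t == y)) = nwalks m x y.
Proof.
elim: m x => [|m IH] x.
  by rewrite (big_pred1 [tuple]) // => t; apply/esym/eqP; apply: tuple0.
rewrite big_tuple_cons /=; apply: eq_bigr => z _.
rewrite -IH big_distrr; apply: eq_bigr => t _ /=.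
by case: (r x z); rewrite ?mul1n ?mul0n.
Qed.

Variable s : seq T.
Hypotheses (s_uniq : uniq s) (s_full : forall x, x \in s).

Definition sum_over (F : T -> nat) : nat := foldr (fun z acc => F z + acc) 0 s.

Lemma eq_sum_over F G : F =1 G -> sum_over F = sum_over G.
Proof. by move=> eqFG; rewrite /sum_over; elim: s => //= z s' ->; rewrite eqFG. Qed.

Lemma sum_overE F : \sum_z F z = sum_over F.
Proof.
rewrite -big_enum /= (perm_big s); last first.
  by apply: uniq_perm; rewrite ?enum_uniq // => x; rewrite mem_enum s_full.
by rewrite /sum_over; elim: s => [|z s' IH]; rewrite ?big_nil ?big_cons //= IH.
Qed.

(* Column y of the walk-count matrices, computed by matrix-vector products so that
   [vm_compute] can evaluate it; the [s]-indexing stands in for [enum T], which does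
   not compute. *)
Fixpoint nwalks_col m y : seq nat :=
  if m is m'.+1 then
    let v := nwalks_col m' y in [seq sum_over (fun z => r x z * nth 0 v (index z s)) | x <- s]
  else [seq nat_of_bool (x == y) | x <- s].

Lemma nth_nwalks_col m x y : nth 0 (nwalks_col m y) (index x s) = nwalks m x y.
Proof.
have idx_lt z : index z s < size s by rewrite index_mem s_full.
elim: m x => [|m IH] x /=; rewrite (nth_map x) // nth_index ?s_full //.
by rewrite -sum_overE; apply: eq_bigr => z _; rewrite IH.
Qed.

End Walks.

Arguments nwalks : simpl never.

Definition o0 : 'I_3 := @Ordinal 3 0 isT.
Definition o1 : 'I_3 := @Ordinal 3 1 isT.
Definition o2 : 'I_3 := @Ordinal 3 2 isT.

Definition palette : seq 'I_3 := [:: o0; o1; o2].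

Lemma mem_palette a : a \in palette.
Proof. by case: a => [[|[|[|a]]] lta]. Qed.

Lemma palette_uniq : uniq palette. Proof. by []. Qed.

Lemma count_uniq3 (a b d x : 'I_3) : uniq [:: a; b; d] -> count (pred1 x) [:: a; b; d] = 1.
Proof.
move: (ltn_ord a) (ltn_ord b) (ltn_ord d) (ltn_ord x).
by rewrite /= !inE -!val_eqE /=; lia.
Qed.

Definition third (a b : 'I_3) : 'I_3 := Ordinal (ltn_pmod (3 - a - b) (isT : 0 < 3)).

Arguments third : simpl never.

Lemma val_third (a b : 'I_3) : a != b -> val (third a b) = 3 - a - b.
Proof.
rewrite ord_eqE => neq; move: (ltn_ord a) (ltn_ord b) => lta ltb.
by rewrite /= modn_small //; lia.
Qed.

Lemma third_uniq a b d : uniq [:: a; b; d] -> third a b = d.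
Proof.
move: (ltn_ord a) (ltn_ord b) (ltn_ord d).
rewrite /= !inE -!val_eqE /= => lta ltb ltd neq.
by apply: val_inj; rewrite val_third -?val_eqE /=; lia.
Qed.

Lemma uniq_third a b : a != b -> uniq [:: a; b; third a b].
Proof.
move=> neq; have := val_third neq; have := ltn_ord a; have := ltn_ord b.
by move: neq; rewrite /= !inE -!val_eqE /=; lia.
Qed.

Notation state := ('I_3 * 'I_3 * 'I_3)%type.

Definition rotate (x : state) : state := (x.1.2, x.2, x.1.1).

(* [x] and [y] are the outer colours at positions (i, i+k, i+2k) and (i+1, i+k+1,
   i+2k+1): outer edges meeting at a vertex differ, and the three spokes at
   u_(i+1), u_(i+k+1), u_(i+2k+1), whose colours are the thirds, end on a common
   inner triangle. *)
Definition compatible (x y : state) : bool :=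
  [&& x.1.1 != y.1.1, x.1.2 != y.1.2, x.2 != y.2 &
      uniq [:: third x.1.1 y.1.1; third x.1.2 y.1.2; third x.2 y.2]].

Lemma compatible_rotate x y : compatible (rotate x) (rotate y) = compatible x y.
Proof. by rewrite /compatible /= !inE !ord_eqE; lia. Qed.

Definition state0 : state := (o0, o0, o0).

(* The state following the last one is the rotation of the first. *)
Definition admissible (s : seq state) : bool :=
  if s is x :: t then
    [&& path compatible x (rcons t (rotate x)), x.1.1 == o0 & (last x t).2 == o2]
  else false.


(** * One-factorisations of GP(3k,k) *)

Section GeneralisedPetersen.
Variables (k : nat) (k_gt0 : 0 < k).
Local Notation n := (3 * k).
Local Notation V := (gp_vertex n).
Local Notation code := ('I_3 * 'I_n)%type.

Lemma n_gt0 : 0 < n. Proof. by rewrite muln_gt0. Qed.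

Definition inZn (m : nat) : 'I_n := Ordinal (ltn_pmod m n_gt0).

Lemma inZn_addMn a q : inZn (a + q * n) = inZn a.
Proof. by apply: val_inj; rewrite /= addnC modnMDl. Qed.

Lemma inZn_modD a b : inZn (a %% n + b) = inZn (a + b).
Proof. by apply: val_inj; rewrite /= modnDml. Qed.

Lemma inZn_val (i : 'I_n) : inZn i = i.
Proof. by apply: val_inj; rewrite /= modn_small. Qed.

Definition cyc (T : Type) (f : 'I_n -> T) (a : nat) : T := f (inZn a).

Lemma cyc_eq (T : Type) (f : 'I_n -> T) a b q : a = b + q * n -> cyc f a = cyc f b.
Proof. by move=> ->; rewrite /cyc inZn_addMn. Qed.

Lemma cyc_modD (T : Type) (f : 'I_n -> T) a b : cyc f (a %% n + b) = cyc f (a + b).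
Proof. by rewrite /cyc inZn_modD. Qed.

Lemma cyc_mod (T : Type) (f : 'I_n -> T) a : cyc f (a %% n) = cyc f a.
Proof. by rewrite -[a %% n]addn0 cyc_modD addn0. Qed.

Lemma cyc_ord (T : Type) (f : 'I_n -> T) (i : 'I_n) : cyc f i = f i.
Proof. by rewrite /cyc inZn_val. Qed.

Ltac cyc_lia := first
  [ apply: (@cyc_eq _ _ _ _ 0); lia | apply: (@cyc_eq _ _ _ _ 1); lia
  | apply: (@cyc_eq _ _ _ _ 2); lia | symmetry; apply: (@cyc_eq _ _ _ _ 1); lia
  | symmetry; apply: (@cyc_eq _ _ _ _ 2); lia ].

Ltac mod_lia :=
  rewrite ?inE ?in_cons ?in_nil ?xpair_eqE -?val_eqE /= ?modn_addE; try lia;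
  repeat case: ifP => ?; rewrite ?modn_addE; try lia; repeat case: ifP => ?; lia.

Definition ends (p : code) : V * V :=
  let i := p.2 in
  if val p.1 == 0 then ((false, i), (false, inZn (i + 1)))
  else if val p.1 == 1 then ((false, i), (true, i))
  else ((true, i), (true, inZn (i + k))).

Definition edge_of (p : code) : {set V} := [set (ends p).1; (ends p).2].

Definition incident (x : V) : seq code :=
  let i := x.2 in
  if x.1 then [:: (o1, i); (o2, i); (o2, inZn (i + 2 * k))]
  else [:: (o0, i); (o1, i); (o0, inZn (i + (n - 1)))].

Lemma mem_edge_of x p : (x \in edge_of p) = (p \in incident x).
Proof.
case: x p => b i [[[|[|[|t]]] ht] j] //; have ? := ltn_ord i; have ? := ltn_ord j.
all: by case: b; rewrite /edge_of /ends /incident /=; mod_lia.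
Qed.

Lemma incident_uniq x : uniq (incident x).
Proof. by case: x => [[|] i]; have ? := ltn_ord i; rewrite /incident /=; mod_lia. Qed.

Lemma edge_of_inj : injective edge_of.
Proof.
move=> p [s j] epq; have ? := ltn_ord j; have ? := ltn_ord s.
have incq x : x \in edge_of p -> (s, j) \in incident x by rewrite epq mem_edge_of.
move: (incq _ (set21 _ _)) (incq _ (set22 _ _)); clear incq epq.
case: p => [[[|[|[|t]]] ht] i] //; have ? := ltn_ord i.
all: by rewrite /ends /incident /= => incq1 incq2; apply/eqP; move: incq1 incq2; mod_lia.
Qed.

Lemma gp_adj_ends p : gp_adj n k (ends p).1 (ends p).2.
Proof.
case: p => [[[|[|[|t]]] ht] i] //; have ? := ltn_ord i.
all: by rewrite /ends /=; mod_lia.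
Qed.

Lemma gp_adj_edge_of x y : gp_adj n k x y -> exists p, [set x; y] = edge_of p.
Proof.
rewrite /edge_of /ends; case: x y => [[|] i] [[|] j] /=.
- case/orP=> /eqP adj; [exists (o2, i) | exists (o2, j); rewrite setUC].
  + by rewrite /= (_ : inZn (i + k) = j) //; apply: val_inj.
  + by rewrite /= (_ : inZn (j + k) = i) //; apply: val_inj.
- by move=> /eqP adj; exists (o1, j); rewrite setUC /= (_ : i = j) //; apply: val_inj.
- by move=> /eqP adj; exists (o1, i); rewrite /= (_ : j = i) //; apply: val_inj.
- case/orP=> /eqP adj; [exists (o0, i) | exists (o0, j); rewrite setUC].
  + by rewrite /= (_ : inZn (i + 1) = j) //; apply: val_inj.
  + by rewrite /= (_ : inZn (j + 1) = i) //; apply: val_inj.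
Qed.

Lemma gp_edgesE : gp_edges n k = [set edge_of p | p : code].
Proof.
apply/setP => E; rewrite inE; apply/existsP/imsetP.
  case=> x /existsP [y /andP [xy /eqP ->]].
  by have [p ->] := gp_adj_edge_of xy; exists p.
case=> p _ ->; exists (ends p).1; apply/existsP; exists (ends p).2.
by rewrite gp_adj_ends eqxx.
Qed.

Definition proper_colouring (c : {ffun code -> 'I_3}) : bool :=
  [forall x, uniq [seq c p | p <- incident x]].

Definition u0 : V := (false, inZn 0).

Definition normalised (c : {ffun code -> 'I_3}) : bool :=
  [seq c p | p <- incident u0] == palette.

Definition colour_class (c : {ffun code -> 'I_3}) (a : 'I_3) : {set {set V}} :=
  edge_of @: [set p | c p == a].

Definition factorisation_of (c : {ffun code -> 'I_3}) : {set {set {set V}}} :=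
  [set colour_class c a | a : 'I_3].

Section ProperColouring.
Variables (c : {ffun code -> 'I_3}) (c_proper : proper_colouring c).

Lemma count_colour_incident x a : count (fun p => c p == a) (incident x) = 1.
Proof.
have := forallP c_proper x; case: x => [[|] i]; rewrite /incident /=.
all: by move/(count_uniq3 a).
Qed.

Lemma colour_used a : exists p, c p = a.
Proof.
have : has (fun p => c p == a) (incident u0) by rewrite has_count count_colour_incident.
by case/hasP => p _ /eqP; exists p.
Qed.

Lemma mem_colour_class p : edge_of p \in colour_class c (c p).
Proof. by apply/imsetP; exists p; rewrite ?inE. Qed.

Lemma colour_classP p a : (edge_of p \in colour_class c a) = (c p == a).
Proof.
apply/imsetP/eqP => [[q]|<-]; last by exists p; rewrite ?inE.
by rewrite inE => /eqP <- /edge_of_inj ->.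
Qed.

Lemma colour_class_inj : injective (colour_class c).
Proof.
move=> a b eab; have [p pa] := colour_used a.
by apply/eqP; rewrite -pa -colour_classP -eab -pa mem_colour_class.
Qed.

Lemma card_colour_class_at a x : #|[set E in colour_class c a | x \in E]| = 1.
Proof.
have -> : [set E in colour_class c a | x \in E] =
          edge_of @: [set p | (c p == a) && (p \in incident x)].
  apply/setP => E; rewrite inE; apply/andP/imsetP.
    by case=> /imsetP [p]; rewrite inE => ap -> xp; exists p; rewrite // inE ap -mem_edge_of.
  case=> p; rewrite inE => /andP [ap xp] ->.
  by rewrite mem_edge_of xp -(eqP ap) mem_colour_class.
by rewrite card_imset ?card_set_count ?incident_uniq ?count_colour_incident //; apply: edge_of_inj.
Qed.

Lemma one_factorisation_of : one_factorisation n k (factorisation_of c).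
Proof.
apply/andP; split; first (apply/and3P; split).
- rewrite gp_edgesE; apply/eqP/setP => E; apply/bigcupP/imsetP.
    by case=> _ /imsetP [a _ ->] /imsetP [p _ ->]; exists p.
  by case=> p _ ->; exists (colour_class c (c p)); rewrite ?mem_colour_class ?imset_f.
- apply/trivIsetP => _ _ /imsetP [a _ ->] /imsetP [b _ ->] neq.
  rewrite -setI_eq0; apply/set0Pn => [[E /setIP [/imsetP [p]]]].
  rewrite inE => /eqP pa -> /[!colour_classP] /eqP pb.
  by move: neq; rewrite -pa -pb eqxx.
- apply/imsetP => [[a _ /esym a_empty]]; have [p pa] := colour_used a.
  by have := mem_colour_class p; rewrite pa a_empty inE.
- apply/forallP => M; apply/implyP => /imsetP [a _ ->]; apply/andP; split.
    by rewrite gp_edgesE; apply/subsetP => E /imsetP [p _ ->]; apply: imset_f.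
  by apply/forallP => x; rewrite card_colour_class_at.
Qed.

End ProperColouring.

Section Factorisation.
Variables (F : {set {set {set V}}}) (F_fact : one_factorisation n k F).

Let cover_F : cover F = [set edge_of p | p : code].
Proof. by case/andP: F_fact => /and3P [/eqP -> _ _] _; rewrite gp_edgesE. Qed.

Let trivIset_F : trivIset F.
Proof. by case/andP: F_fact => /and3P []. Qed.

Let matching_F B : B \in F -> perfect_matching n k B.
Proof. by case/andP: F_fact => _ /forallP /(_ B) /implyP. Qed.

Definition factor p : {set {set V}} := pblock F (edge_of p).

Lemma edge_of_in_cover p : edge_of p \in cover F.
Proof. by rewrite cover_F imset_f. Qed.

Lemma factor_mem p : factor p \in F.
Proof. exact: pblock_mem (edge_of_in_cover p). Qed.

Lemma mem_factor p : edge_of p \in factor p.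
Proof. by rewrite mem_pblock edge_of_in_cover. Qed.

Lemma factorE B p : B \in F -> edge_of p \in B -> factor p = B.
Proof. exact: def_pblock. Qed.

Lemma factor_incident_neq x p q :
  p \in incident x -> q \in incident x -> p != q -> factor p != factor q.
Proof.
move=> px qx neq; apply/eqP => pq.
have /andP [_ /forallP /(_ x) /eqP at_x] := matching_F (factor_mem p).
have : [set edge_of p; edge_of q] \subset [set E in factor p | x \in E].
  apply/subsetP => E; rewrite !inE => /orP [] /eqP ->; rewrite mem_edge_of ?px ?qx //.
    by rewrite mem_factor.
  by rewrite pq mem_factor.
by move/subset_leq_card; rewrite at_x cards2 (inj_eq edge_of_inj) neq.
Qed.

Lemma uniq_factors_at x : uniq [seq factor p | p <- incident x].
Proof.
rewrite map_inj_in_uniq ?incident_uniq // => p q px qx pq.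
by case: (eqVneq p q) => // /(factor_incident_neq px qx); rewrite pq eqxx.
Qed.

Lemma factor_at x B : B \in F -> exists2 p, p \in incident x & factor p = B.
Proof.
move=> BF; have /andP [_ /forallP /(_ x) /eqP at_x] := matching_F BF.
have [E] : exists E, E \in [set E in B | x \in E] by apply/card_gt0P; rewrite at_x.
rewrite inE => /andP [EB xE].
have : E \in cover F by apply/bigcupP; exists B.
rewrite cover_F => /imsetP [p _ Ep]; exists p; first by rewrite -mem_edge_of -Ep.
by rewrite (factorE BF) -?Ep.
Qed.

Definition factor_colour B : 'I_3 :=
  nth o0 palette (index B [seq factor p | p <- incident u0]).

Definition colouring_of : {ffun code -> 'I_3} := [ffun p => factor_colour (factor p)].

Lemma factor_colour_inj : {in F &, injective factor_colour}.
Proof.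
have in_u0 B : B \in F -> B \in [seq factor p | p <- incident u0].
  by case/(factor_at u0) => p pu0 <-; apply: map_f.
move=> B1 B2 /in_u0 B1u0 /in_u0 B2u0 /eqP.
rewrite /factor_colour nth_uniq ?palette_uniq ?index_mem // => /eqP eq_idx.
by rewrite -(nth_index B1 B1u0) eq_idx nth_index.
Qed.

Lemma colouring_of_at x :
  [seq colouring_of p | p <- incident x] = map factor_colour [seq factor p | p <- incident x].
Proof. by rewrite -map_comp; apply: eq_map => p; rewrite ffunE. Qed.

Lemma colouring_of_proper : proper_colouring colouring_of.
Proof.
apply/forallP => x; rewrite colouring_of_at map_inj_in_uniq ?uniq_factors_at // => B1 B2 /mapP [p _ ->] /mapP [q _ ->].
exact: factor_colour_inj (factor_mem p) (factor_mem q).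
Qed.

Lemma colouring_of_normalised : normalised colouring_of.
Proof.
by rewrite /normalised colouring_of_at map_nth_index ?uniq_factors_at ?size_map.
Qed.

Lemma factorisation_ofK : factorisation_of colouring_of = F.
Proof.
have class_colour B : B \in F -> colour_class colouring_of (factor_colour B) = B.
  move=> BF; apply/setP => E; apply/imsetP/idP => [[p]|EB].
    rewrite inE ffunE => /eqP /(factor_colour_inj (factor_mem p) BF) <- ->.
    exact: mem_factor.
  have : E \in cover F by apply/bigcupP; exists B.
  rewrite cover_F => /imsetP [p _ Ep]; exists p => //.
  by rewrite inE ffunE (factorE BF) -?Ep.
apply/setP => B; apply/imsetP/idP => [[a _ ->]|BF].
  have [p <-] := colour_used colouring_of_proper a.
  by rewrite ffunE class_colour ?factor_mem.
by exists (factor_colour B); rewrite ?class_colour.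
Qed.

End Factorisation.

Lemma colouring_ofK c :
  proper_colouring c -> normalised c -> colouring_of (factorisation_of c) = c.
Proof.
move=> c_proper /eqP c_norm.
have factor_class p : factor (factorisation_of c) p = colour_class c (c p).
  apply: (factorE (one_factorisation_of c_proper)); last exact: mem_colour_class.
  by apply/imsetP; exists (c p).
apply/ffunP => p; rewrite ffunE /factor_colour !factor_class.
rewrite (eq_map factor_class) map_comp c_norm.
by rewrite index_map ?nth_index ?mem_palette //; apply: colour_class_inj.
Qed.

Lemma card_one_factorisations :
  #|one_factorisations n k| = #|[set c | proper_colouring c && normalised c]|.
Proof.
symmetry; apply: (@card_bij_in _ _ _ _ factorisation_of colouring_of).
- by move=> c; rewrite !inE => /andP [c_proper _]; apply: one_factorisation_of.
- by move=> F; rewrite !inE => F_fact; rewrite colouring_of_proper ?colouring_of_normalised.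
- by move=> c; rewrite inE => /andP [c_proper c_norm]; apply: colouring_ofK.
- by move=> F; rewrite inE; apply: factorisation_ofK.
Qed.

(** * Reduction to colourings of the outer cycle *)

Section ColouringOnIntegers.
Variables (c : {ffun code -> 'I_3}) (c_proper : proper_colouring c).

Definition colour (t : 'I_3) : nat -> 'I_3 := cyc (fun i => c (t, i)).

Lemma proper_at_u x : uniq [:: colour o0 x; colour o1 x; colour o0 (x + (n - 1))].
Proof. by have := forallP c_proper (false, inZn x); rewrite /incident /= inZn_modD. Qed.

Lemma proper_at_v x : uniq [:: colour o1 x; colour o2 x; colour o2 (x + 2 * k)].
Proof. by have := forallP c_proper (true, inZn x); rewrite /incident /= inZn_modD. Qed.

Lemma outer_neq x : colour o0 x != colour o0 x.+1.
Proof.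
have -> : colour o0 x = colour o0 (x.+1 + (n - 1)) by cyc_lia.
by have := proper_at_u x.+1; rewrite /= !inE => /and3P [/norP [_]]; rewrite eq_sym.
Qed.

Lemma spoke_third x : colour o1 x = third (colour o0 (x + (n - 1))) (colour o0 x).
Proof. by apply/esym/third_uniq; have := proper_at_u x; rewrite -(rot_uniq 2). Qed.

(* The inner edges form the triangles v_y v_(y+k) v_(y+2k); at each corner the spoke
   must take the colour of the opposite side. *)
Lemma inner_triangle y :
  colour o1 (y + 2 * k) = colour o2 y /\
  uniq [:: colour o1 y; colour o1 (y + k); colour o1 (y + 2 * k)].
Proof.
have := proper_at_v y; have := proper_at_v (y + k); have := proper_at_v (y + 2 * k).
have -> : colour o2 (y + k + 2 * k) = colour o2 y by cyc_lia.
have -> : colour o2 (y + 2 * k + 2 * k) = colour o2 (y + k) by cyc_lia.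
move: (ltn_ord (colour o2 y)) (ltn_ord (colour o2 (y + k))) (ltn_ord (colour o2 (y + 2 * k))).
move: (ltn_ord (colour o1 y)) (ltn_ord (colour o1 (y + k))) (ltn_ord (colour o1 (y + 2 * k))).
by rewrite /= !inE !ord_eqE => *; split; try apply: ord_inj; lia.
Qed.

End ColouringOnIntegers.

Definition outer_colouring (c : {ffun code -> 'I_3}) : {ffun 'I_n -> 'I_3} :=
  [ffun i => c (o0, i)].

Definition spoke_colour (e : {ffun 'I_n -> 'I_3}) : nat -> 'I_3 :=
  cyc (fun i => third (cyc e (i + (n - 1))) (e i)).

Definition colouring_of_outer (e : {ffun 'I_n -> 'I_3}) : {ffun code -> 'I_3} :=
  [ffun p : code => if val p.1 == 0 then e p.2
                    else if val p.1 == 1 then spoke_colour e p.2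
                    else spoke_colour e (p.2 + 2 * k)].

Definition triple (e : {ffun 'I_n -> 'I_3}) (x : nat) : state :=
  (cyc e x, cyc e (x + k), cyc e (x + 2 * k)).

Definition outer_valid (e : {ffun 'I_n -> 'I_3}) : bool :=
  [forall i : 'I_n, compatible (triple e i) (triple e i.+1)].

Definition outer_normalised (e : {ffun 'I_n -> 'I_3}) : bool :=
  (e (inZn 0) == o0) && (e (inZn (n - 1)) == o2).

Lemma spoke_colourE e x : spoke_colour e x = third (cyc e (x + (n - 1))) (cyc e x).
Proof. by rewrite /spoke_colour {1}/cyc /= cyc_modD. Qed.

Lemma spoke_colour_succ e x : spoke_colour e x.+1 = third (cyc e x) (cyc e x.+1).
Proof. by rewrite spoke_colourE (_ : cyc e (x.+1 + (n - 1)) = cyc e x) //; cyc_lia. Qed.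

Lemma triple_rotate e x : triple e (x + k) = rotate (triple e x).
Proof. by rewrite /triple /rotate /=; congr (_, _, _); cyc_lia. Qed.

Lemma outer_valid_at e x : outer_valid e -> compatible (triple e x) (triple e x.+1).
Proof.
move=> /forallP /(_ (inZn x)); rewrite /triple /= -[(x %% n).+1]addn1 -!addnA.
by rewrite !cyc_modD cyc_mod !addnA addn1.
Qed.

Lemma outer_valid_spokes e x : outer_valid e ->
  cyc e (x + (n - 1)) != cyc e x /\
  uniq [:: spoke_colour e x; spoke_colour e (x + k); spoke_colour e (x + 2 * k)].
Proof.
move/(outer_valid_at (x + (n - 1))); rewrite /compatible /triple /=.
have -> : cyc e (x + (n - 1)).+1 = cyc e x by cyc_lia.
have -> : cyc e ((x + (n - 1)).+1 + k) = cyc e (x + k) by cyc_lia.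
have -> : cyc e ((x + (n - 1)).+1 + 2 * k) = cyc e (x + 2 * k) by cyc_lia.
have -> : cyc e (x + (n - 1) + k) = cyc e (x + k + (n - 1)) by cyc_lia.
have -> : cyc e (x + (n - 1) + 2 * k) = cyc e (x + 2 * k + (n - 1)) by cyc_lia.
by rewrite -!spoke_colourE => /and4P [].
Qed.

Lemma cyc_outer c x : cyc (outer_colouring c) x = colour c o0 x.
Proof. by rewrite /cyc ffunE. Qed.

Lemma spoke_colour_outer c x :
  proper_colouring c -> spoke_colour (outer_colouring c) x = colour c o1 x.
Proof. by move=> c_proper; rewrite spoke_colourE !cyc_outer spoke_third. Qed.

Lemma outer_colouringK c :
  proper_colouring c -> colouring_of_outer (outer_colouring c) = c.
Proof.
move=> c_proper; apply/ffunP => [[[[|[|[|t]]] lt3] i]] //; rewrite ffunE /=.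
- by rewrite ffunE; congr (c (_, _)); apply: val_inj.
- by rewrite spoke_colour_outer // /colour cyc_ord; congr (c (_, _)); apply: val_inj.
- rewrite spoke_colour_outer // (inner_triangle c_proper i).1 /colour cyc_ord.
  by congr (c (_, _)); apply: val_inj.
Qed.

Lemma outer_colouring_valid c : proper_colouring c -> outer_valid (outer_colouring c).
Proof.
move=> c_proper; apply/forallP => i; rewrite /compatible /triple /=.
rewrite -!spoke_colour_succ !spoke_colour_outer // !cyc_outer !addSn !outer_neq //=.
by have := (inner_triangle c_proper i.+1).2; rewrite !addSn.
Qed.

Lemma outer_colouring_normalised c : normalised c -> outer_normalised (outer_colouring c).
Proof.
rewrite /normalised /outer_normalised /incident /= !ffunE inZn_modD.
by case/eqP => -> _ ->.
Qed.

Lemma colouring_of_outerK e : outer_colouring (colouring_of_outer e) = e.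
Proof. by apply/ffunP => i; rewrite !ffunE. Qed.

Lemma colouring_of_outer_proper e : outer_valid e -> proper_colouring (colouring_of_outer e).
Proof.
move=> e_valid; apply/forallP => [[[] i]]; rewrite /incident /= !ffunE /=.
  have [_] := outer_valid_spokes i e_valid.
  have -> : spoke_colour e ((i + 2 * k) %% n + 2 * k) = spoke_colour e (i + k).
    by rewrite /spoke_colour cyc_modD; cyc_lia.
  by rewrite /= !inE !ord_eqE; lia.
have [neq _] := outer_valid_spokes i e_valid.
have := uniq_third neq; rewrite -(rot_uniq 1) -spoke_colourE cyc_ord.
exact.
Qed.

Lemma colouring_of_outer_normalised e :
  outer_normalised e -> normalised (colouring_of_outer e).
Proof.
case/andP => /eqP e0 /eqP e_last.
by rewrite /normalised /incident /= !ffunE /= spoke_colourE /cyc inZn_modD add0n mod0n e0 e_last.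
Qed.

Lemma card_proper_colourings :
  #|[set c | proper_colouring c && normalised c]| =
  #|[set e | outer_valid e && outer_normalised e]|.
Proof.
apply: (@card_bij_in _ _ _ _ outer_colouring colouring_of_outer).
- by move=> c; rewrite !inE => /andP [c_proper c_norm];
     rewrite outer_colouring_valid ?outer_colouring_normalised.
- by move=> e; rewrite !inE => /andP [e_valid e_norm];
     rewrite colouring_of_outer_proper ?colouring_of_outer_normalised.
- by move=> c; rewrite inE => /andP [c_proper _]; apply: outer_colouringK.
- by move=> e _; apply: colouring_of_outerK.
Qed.

(** * Reduction to walks of states *)

Definition states_of (e : {ffun 'I_n -> 'I_3}) : k.-tuple state :=
  [tuple of map (triple e) (iota 0 k)].

Definition outer_of_states (s : seq state) : {ffun 'I_n -> 'I_3} :=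
  [ffun i : 'I_n => if i < k then (nth state0 s i).1.1
                    else if i < 2 * k then (nth state0 s (i - k)).1.2
                    else (nth state0 s (i - 2 * k)).2].

Lemma nth_states_of e i : i < k -> nth state0 (states_of e) i = triple e i.
Proof. by move=> lt_ik; rewrite (nth_map 0) ?nth_iota ?size_iota. Qed.

Lemma outer_of_statesK e : outer_of_states (states_of e) = e.
Proof.
apply/ffunP => i; have lt_in := ltn_ord i; rewrite ffunE -[e i]cyc_ord.
by case: ifP => ?; [|case: ifP => ?]; rewrite nth_states_of /=; try lia; cyc_lia.
Qed.

Lemma states_ofK (t : k.-tuple state) : states_of (outer_of_states t) = t.
Proof.
apply: val_inj; apply: (@eq_from_nth _ state0); rewrite ?size_tuple // => i lt_ik.
rewrite nth_states_of // /triple /cyc !ffunE /=.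
have -> : i %% n = i by rewrite modn_small //; lia.
have -> : (i + k) %% n = i + k by rewrite modn_small //; lia.
have -> : (i + 2 * k) %% n = i + 2 * k by rewrite modn_small //; lia.
have -> : (i + k < k) = false by lia.
have -> : (i + 2 * k < k) = false by lia.
have -> : (i + 2 * k < 2 * k) = false by lia.
have -> : i + k < 2 * k by lia.
by rewrite lt_ik !addnK; case: (nth state0 t i) => [[]].
Qed.

Lemma outer_validE e :
  outer_valid e = all (fun i => compatible (triple e i) (triple e i.+1)) (iota 0 k).
Proof.
apply/idP/allP => [e_valid i _ | valid_k]; first exact: outer_valid_at.
have shift i : compatible (triple e i) (triple e i.+1) ->
               compatible (triple e (i + k)) (triple e (i + k).+1).
  by rewrite -addSn !triple_rotate compatible_rotate.
apply/forallP => i; have lt_in := ltn_ord i.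
case: (ltnP i k) => [lt_ik | le_ki]; first by apply: valid_k; rewrite mem_iota.
case: (ltnP i (2 * k)) => [lt_i2k | le_2ki].
  by rewrite (_ : nat_of_ord i = i - k + k); [apply/shift/valid_k; rewrite mem_iota | ]; lia.
rewrite (_ : nat_of_ord i = i - 2 * k + k + k); last lia.
by apply/shift/shift/valid_k; rewrite mem_iota; lia.
Qed.

Lemma admissible_states_of e :
  admissible (states_of e) = outer_valid e && outer_normalised e.
Proof.
have iota_k : iota 0 k = 0 :: iota 1 (k - 1) by rewrite -[in LHS](subnK k_gt0) addn1.
rewrite /admissible /states_of /= iota_k /= last_map last_iota add0n.
have iota_rcons : rcons (iota 1 (k - 1)) k = iota 1 k.
  by rewrite -cats1 -[in RHS](subnK k_gt0) iotaD add1n subn1 prednK.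
rewrite -[rotate _]triple_rotate add0n -map_rcons iota_rcons.
rewrite path_iota_map -outer_validE /outer_normalised.
have -> : (triple e (k - 1)).2 = e (inZn (n - 1)) by rewrite /triple /=; cyc_lia.
by [].
Qed.

Lemma card_outer_colourings :
  #|[set e | outer_valid e && outer_normalised e]| = #|[set t : k.-tuple state | admissible t]|.
Proof.
apply: (@card_bij_in _ _ _ _ states_of (fun t => outer_of_states t)).
- by move=> e; rewrite !inE admissible_states_of.
- by move=> t; rewrite !inE -admissible_states_of states_ofK.
- by move=> e _; apply: outer_of_statesK.
- by move=> t _; apply: states_ofK.
Qed.

End GeneralisedPetersen.

(** * The transfer-matrix count *)

Definition closing (x y : state) : nat :=
  [&& x.1.1 == o0, y.2 == o2 & compatible y (rotate x)].

Definition closed_walks (m : nat) : nat :=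
  \sum_(x : state) \sum_(y : state) closing x y * nwalks compatible m x y.

Lemma card_admissible m :
  #|[set t : m.+1.-tuple state | admissible t]| = closed_walks m.
Proof.
rewrite card_set_sum big_tuple_cons; apply: eq_bigr => x _.
under [RHS]eq_bigr => y _ do rewrite -sum_path_last big_distrr.
rewrite exchange_big; apply: eq_bigr => t _ /=.
rewrite (bigD1 (last x t)) //= eqxx andbT big1 ?addn0 => [|y /negbTE y_last].
  rewrite rcons_path /closing.
  by case: (path _ _ _); case: (compatible _ _); case: (_ == o0); case: (_ == o2).
by rewrite eq_sym y_last andbF muln0.
Qed.

Definition all_states : seq state :=
  [seq (ab, d) | ab <- [seq (a, b) | a <- palette, b <- palette], d <- palette].

Lemma all_states_uniq : uniq all_states. Proof. by []. Qed.

Lemma mem_all_states x : x \in all_states.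
Proof. by case: x => [[[[|[|[|?]]] ?] [[|[|[|?]]] ?]] [[|[|[|?]]] ?]]. Qed.

Lemma nwalks_compatible_identity x y :
  nwalks compatible 5 x y + 4 * nwalks compatible 1 x y = 5 * nwalks compatible 3 x y.
Proof.
have : all (fun y =>
    let w5 := nwalks_col compatible all_states 5 y in
    let w3 := nwalks_col compatible all_states 3 y in
    let w1 := nwalks_col compatible all_states 1 y in
    all (fun x => let i := index x all_states in
      nth 0 w5 i + 4 * nth 0 w1 i == 5 * nth 0 w3 i) all_states) all_states.
  by vm_compute.
move/allP/(_ y (mem_all_states y)); cbv beta zeta.
move/allP/(_ x (mem_all_states x)); cbv beta zeta.
move/eqnP => check.
by rewrite -!(nth_nwalks_col compatible all_states_uniq mem_all_states).
Qed.

Lemma nwalks_compatible_rec m x y :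
  nwalks compatible (5 + m) x y + 4 * nwalks compatible (1 + m) x y =
  5 * nwalks compatible (3 + m) x y.
Proof.
rewrite !nwalksD !big_distrr -big_split; apply: eq_bigr => z _ /=.
by rewrite mulnA -mulnDl nwalks_compatible_identity mulnA.
Qed.

Lemma closed_walks_rec m :
  closed_walks (5 + m) + 4 * closed_walks (1 + m) = 5 * closed_walks (3 + m).
Proof.
rewrite /closed_walks !big_distrr -big_split; apply: eq_bigr => x _ /=.
rewrite !big_distrr -big_split; apply: eq_bigr => y _ /=.
by rewrite mulnCA -mulnDr nwalks_compatible_rec mulnCA.
Qed.

Lemma closed_walksE m : closed_walks m =
  sum_over all_states (fun y => let w := nwalks_col compatible all_states m y in
    sum_over all_states (fun x => closing x y * nth 0 w (index x all_states))).
Proof.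
have sumE := sum_overE all_states_uniq mem_all_states.
rewrite /closed_walks exchange_big sumE; refine (eq_sum_over _ _) => y.
rewrite sumE; refine (eq_sum_over _ _) => x.
by rewrite -(nth_nwalks_col compatible all_states_uniq mem_all_states).
Qed.

Lemma closed_walks_small : [seq closed_walks m | m <- iota 0 5] = [:: 1; 4; 3; 20; 11].
Proof. by rewrite (eq_map closed_walksE); vm_compute. Qed.

Lemma eq_from_recurrence (f g : nat -> nat) :
  (forall m, f m.+4 + 4 * f m = 5 * f m.+2) ->
  (forall m, g m.+4 + 4 * g m = 5 * g m.+2) ->
  (forall m, m < 4 -> f m = g m) -> f =1 g.
Proof.
move=> rec_f rec_g base; elim/ltn_ind => -[|[|[|[|m]]]] IH; try exact: base.
by have := rec_f m; have := rec_g m; rewrite (IH m) ?(IH m.+2); lia.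
Qed.

Definition jacobsthal_count (k : nat) : nat :=
  if odd k then jacobsthal k else 4 * jacobsthal k.

Lemma jacobsthal_count_rec m :
  jacobsthal_count m.+4 + 4 * jacobsthal_count m = 5 * jacobsthal_count m.+2.
Proof.
by rewrite /jacobsthal_count /= !negbK; case: (odd m); lia.
Qed.

Lemma closed_walks_jacobsthal m : closed_walks m = jacobsthal_count m.+1.
Proof.
have small i : i < 5 -> closed_walks i = nth 0 [:: 1; 4; 3; 20; 11] i.
  by move=> lt_i5; rewrite -closed_walks_small (nth_map 0) ?nth_iota ?size_iota.
case: m => [|m]; first by rewrite small.
apply: (eq_from_recurrence (f := fun m => closed_walks m.+1)
                           (g := fun m => jacobsthal_count m.+2)).
- by move=> j; apply: closed_walks_rec.
- by move=> j; apply: jacobsthal_count_rec.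
- by case=> [|[|[|[|i]]]] // _; rewrite small.
Qed.

Theorem theorem1 (k : nat) (hk : 1 <= k) :
  #|one_factorisations (3 * k) k| =
    (if odd k then jacobsthal k else 4 * jacobsthal k).
Proof.
rewrite (card_one_factorisations hk) (card_proper_colourings hk) (card_outer_colourings hk).
case: k hk => [//|m] _.
by rewrite card_admissible closed_walks_jacobsthal.
Qed.
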